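(* Let $D$ be a positive integer that is not a perfect square, let $(t_1,u_1)$ be the least strictly positive integer solution of $X^2-DY^2=1$, $\epsilon=t_1+u_1\sqrt D$, and $\epsilon^k=t_k+u_k\sqrt D$ for $k\in\mathbb{Z}$. For a positive integer $m$ let $P(m)$ be the least positive integer $P$ with $t_{k+P}\equiv t_k$ and $u_{k+P}\equiv u_k\pmod m$ for all $k$. Then for every positive integer $m$, $$P(m)\le 2m(\log m+1).$$
   Context: Logarithms: $\log x=\log_2|x|$ if $|x|\ge4$, and $\log x=2$ if $|x|<4$. *)

From Stdlib Require Import ZArith Reals Lra Lia.
Open Scope Z_scope.

(* Logarithm convention of the paper: log x = log_2 |x| if |x| >= 4, else 2. *)
Definition plog (x : R) : R :=
  if Rle_dec 4 (Rabs x) then (ln (Rabs x) / ln 2)%R else 2%R.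

Definition fundamental_solution (D t1 u1 : Z) : Prop :=
  0 < t1 /\ 0 < u1 /\ t1 ^ 2 - D * u1 ^ 2 = 1 /\
  (forall t u : Z, 0 < t -> 0 < u -> t ^ 2 - D * u ^ 2 = 1 -> t1 <= t /\ u1 <= u).

(* eps^n = t_n + u_n sqrt D for n : nat, eps = t1 + u1 sqrt D. *)
Fixpoint pell_pow_nat (D t1 u1 : Z) (n : nat) : Z * Z :=
  match n with
  | O => (1, 0)
  | S n' => let (t, u) := pell_pow_nat D t1 u1 n' in
            (t1 * t + D * u1 * u, t1 * u + u1 * t)
  end.

(* eps^k for k : Z; eps^{-1} = t1 - u1 sqrt D, hence eps^{-n} = t_n - u_n sqrt D. *)
Definition pell_pow (D t1 u1 : Z) (k : Z) : Z * Z :=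
  if 0 <=? k then pell_pow_nat D t1 u1 (Z.to_nat k)
  else let (t, u) := pell_pow_nat D t1 u1 (Z.to_nat (- k)) in (t, - u).

Definition pell_t (D t1 u1 k : Z) : Z := fst (pell_pow D t1 u1 k).
Definition pell_u (D t1 u1 k : Z) : Z := snd (pell_pow D t1 u1 k).

Definition is_period (D t1 u1 m P : Z) : Prop :=
  forall k : Z,
    Z.modulo (pell_t D t1 u1 (k + P)) m = Z.modulo (pell_t D t1 u1 k) m /\
    Z.modulo (pell_u D t1 u1 (k + P)) m = Z.modulo (pell_u D t1 u1 k) m.

Definition is_least_period (D t1 u1 m P : Z) : Prop :=
  0 < P /\ is_period D t1 u1 m P /\
  (forall Q : Z, 0 < Q -> is_period D t1 u1 m Q -> P <= Q).

(* Write e = t1 + u1 sqrt D.  Only N(e) = 1 is used, and in fact P(m) <= 2m.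
   For a prime p there is f <= p with e^(2f) = 1 (mod p): e^2 = 1 + 2 D u1^2 + 2 t1 u1 sqrt D
   is 1 mod 2, and is 1 plus a square-zero element mod p when p | D, so its p-th power is 1;
   for odd p not dividing D, the Frobenius sends e to t1 + D^((p-1)/2) u1 sqrt D, which by
   Euler's criterion is e or its conjugate e^-1, so e^(p-1) = 1 or e^(p+1) = 1 (mod p).
   For m = p k, an exponent killing e modulo k is multiplied by p when p | k (e^n = 1 mod k
   forces e^(n p) = 1 mod p k) and by f when p does not divide k.  By induction on m some
   2q with q <= m is a period, so P(m) <= 2m <= 2m (log m + 1). *)

From Stdlib Require Import ZArith Znumtheory Zpow_facts Reals Lia Lra Classical.
From mathcomp Require all_boot all_algebra ssrZ zify ring.

Open Scope Z_scope.

(* A pair (a, b) stands for a + b sqrt D in Z[sqrt D]. *)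
Definition qone : Z * Z := (1, 0).
Definition qadd (x y : Z * Z) : Z * Z := (fst x + fst y, snd x + snd y).
Definition qmul (D : Z) (x y : Z * Z) : Z * Z :=
  (fst x * fst y + D * snd x * snd y, fst x * snd y + snd x * fst y).
Fixpoint qpow (D : Z) (x : Z * Z) (n : nat) : Z * Z :=
  match n with O => qone | S n => qmul D x (qpow D x n) end.
Definition qconj (x : Z * Z) : Z * Z := (fst x, - snd x).
Definition qnorm (D : Z) (x : Z * Z) : Z := fst x * fst x - D * snd x * snd x.
Definition qcong (m : Z) (x y : Z * Z) : Prop :=
  (m | fst x - fst y) /\ (m | snd x - snd y).

Section QuadraticArithmetic.
Variable D : Z.

Lemma qmulC x y : qmul D x y = qmul D y x.
Proof. unfold qmul; f_equal; ring. Qed.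

Lemma qmulA x y z : qmul D x (qmul D y z) = qmul D (qmul D x y) z.
Proof. unfold qmul; cbn [fst snd]; f_equal; ring. Qed.

Lemma qmul1 x : qmul D qone x = x.
Proof. destruct x; unfold qmul, qone; cbn [fst snd]; f_equal; ring. Qed.

Lemma qmulr1 x : qmul D x qone = x.
Proof. rewrite qmulC; apply qmul1. Qed.

Lemma qconjM x y : qconj (qmul D x y) = qmul D (qconj x) (qconj y).
Proof. unfold qconj, qmul; cbn [fst snd]; f_equal; ring. Qed.

Lemma qmul_conj x : qmul D x (qconj x) = (qnorm D x, 0).
Proof. unfold qmul, qconj, qnorm; cbn [fst snd]; f_equal; ring. Qed.

Lemma qpowS x n : qpow D x (S n) = qmul D x (qpow D x n).
Proof. reflexivity. Qed.

Lemma qpowD x a b : qpow D x (a + b) = qmul D (qpow D x a) (qpow D x b).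
Proof.
  induction a as [|a IH]; cbn [Nat.add qpow].
  - now rewrite qmul1.
  - now rewrite IH, qmulA.
Qed.

Lemma qpowM x a b : qpow D x (a * b) = qpow D (qpow D x a) b.
Proof.
  induction b as [|b IH].
  - now rewrite Nat.mul_0_r.
  - now rewrite Nat.mul_succ_r, qpowD, IH, qmulC.
Qed.

Lemma qpow_one n : qpow D qone n = qone.
Proof. induction n as [|n IH]; cbn [qpow]; [reflexivity | now rewrite IH, qmul1]. Qed.

Lemma qpow_rat a n : qpow D (a, 0) n = (a ^ Z.of_nat n, 0).
Proof.
  induction n as [|n IH]; [reflexivity|].
  cbn [qpow]; rewrite IH, Nat2Z.inj_succ, Z.pow_succ_r by lia.
  unfold qmul; cbn [fst snd]; f_equal; ring.
Qed.

Lemma qpow_surd_odd b k :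
  qpow D (0, b) (S (2 * k)) = (0, D ^ Z.of_nat k * b ^ Z.of_nat (S (2 * k))).
Proof.
  cbn [qpow]; rewrite qpowM.
  replace (qpow D (0, b) 2) with (D * b ^ 2, 0)
    by (cbn [qpow]; unfold qmul, qone; cbn [fst snd]; f_equal; ring).
  rewrite qpow_rat; unfold qmul; cbn [fst snd].
  rewrite Nat2Z.inj_succ, Nat2Z.inj_mul, Z.pow_succ_r, Z.pow_mul_r, Z.pow_mul_l by lia.
  change (Z.of_nat 2) with 2; f_equal; ring.
Qed.

End QuadraticArithmetic.

Section Congruence.
Variables (D m : Z).

Lemma qcong_refl x : qcong m x x.
Proof. split; exists 0; ring. Qed.

Lemma qcong_trans x y z : qcong m x y -> qcong m y z -> qcong m x z.
Proof.
  intros [[a Ha] [b Hb]] [[c Hc] [d Hd]]; split; [exists (a + c) | exists (b + d)]; lia.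
Qed.

Lemma qcong_mul x x' y y' :
  qcong m x x' -> qcong m y y' -> qcong m (qmul D x y) (qmul D x' y').
Proof.
  destruct x as [a b], x' as [a' b'], y as [c d], y' as [c' d'].
  unfold qcong, qmul; cbn [fst snd]; intros [Ha Hb] [Hc Hd]; split.
  - replace (a * c + D * b * d - (a' * c' + D * b' * d'))
      with (a * (c - c') + (a - a') * c' + D * (b * (d - d') + (b - b') * d')) by ring.
    auto using Z.divide_add_r, Z.divide_mul_l, Z.divide_mul_r.
  - replace (a * d + b * c - (a' * d' + b' * c'))
      with (a * (d - d') + (a - a') * d' + (b * (c - c') + (b - b') * c')) by ring.
    auto using Z.divide_add_r, Z.divide_mul_l, Z.divide_mul_r.
Qed.

Lemma qcong_pow x y n : qcong m x y -> qcong m (qpow D x n) (qpow D y n).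
Proof.
  intros Hxy; induction n as [|n IH]; cbn [qpow].
  - apply qcong_refl.
  - now apply qcong_mul.
Qed.

Lemma qcong_pow_one x n : qcong m x qone -> qcong m (qpow D x n) qone.
Proof. intros Hx; rewrite <- (qpow_one D n); now apply qcong_pow. Qed.

Lemma qpow_near_one a b n :
  (m | a * a) -> (m | a * b) -> (m | D * b * b) ->
  qcong m (qpow D (1 + a, b) n) (1 + Z.of_nat n * a, Z.of_nat n * b).
Proof.
  intros Haa Hab Hbb; induction n as [|n IH]; cbn [qpow].
  - split; exists 0; cbn [fst snd qone Z.of_nat]; ring.
  - eapply qcong_trans; [apply qcong_mul; [apply qcong_refl | exact IH] |].
    unfold qcong, qmul; cbn [fst snd]; rewrite Nat2Z.inj_succ; split.
    + replace ((1 + a) * (1 + Z.of_nat n * a) + D * b * (Z.of_nat n * b)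
               - (1 + Z.succ (Z.of_nat n) * a))
        with (Z.of_nat n * (a * a) + Z.of_nat n * (D * b * b)) by ring.
      auto using Z.divide_add_r, Z.divide_mul_r.
    + replace ((1 + a) * (Z.of_nat n * b) + b * (1 + Z.of_nat n * a)
               - Z.succ (Z.of_nat n) * b)
        with (2 * Z.of_nat n * (a * b)) by ring.
      auto using Z.divide_mul_r.
Qed.

End Congruence.

Module QuadraticFrobenius.
Import all_boot all_algebra ssrZ zify ring GRing.Theory.
Local Open Scope ring_scope.

Lemma natmulZ (z : Z) n : z *+ n = Z.mul z (Z.of_nat n).
Proof. by rewrite -mulr_natr -(rmorph_nat Z.of_nat) natn. Qed.

Lemma prime_of_Zprime (p : Z) : Znumtheory.prime p -> prime (Z.to_nat p).
Proof.
move=> pp; have p2 := prime_ge_2 _ pp.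
apply/primeP; split=> [|d /dvdnP [q hq]]; first lia.
have /(prime_divisors _ pp) : Z.divide (Z.of_nat d) p.
  by exists (Z.of_nat q); lia.
move=> [|[|[|]]] hd; apply/pred2P; lia.
Qed.

Lemma Z_fermat_little (p a : Z) : Znumtheory.prime p -> Z.divide p (Z.pow a p - a).
Proof.
move=> pp; have p2 := prime_ge_2 _ pp.
have fermat_nat n q : prime q ->
    Z.divide (Z.of_nat q) (Z.pow (Z.of_nat n) (Z.of_nat q) - Z.of_nat n).
  move=> /(fermat_little n) h.
  exists (Z.of_nat (n ^ q %/ q) - Z.of_nat (n %/ q))%Z.
  have := divn_eq (n ^ q) q; have := divn_eq n q; nia.
have r_bound := Z.mod_pos_bound a p ltac:(lia).
set r := Z.modulo a p in r_bound.
have := fermat_nat (Z.to_nat r) _ (prime_of_Zprime _ pp).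
rewrite !Z2Nat.id; try lia.
move=> /(Zdivide_mod_minus _ _ _ r_bound) r_fixed.
apply: Zmod_divide; first lia.
by rewrite Zminus_mod Zpower_mod -/r ?r_fixed ?Z.sub_diag ?Zmod_0_l; lia.
Qed.

Lemma exprD_prime_comm (R : pzRingType) (x y : R) p : prime p -> GRing.comm x y ->
  exists w, (x + y) ^+ p = x ^+ p + y ^+ p + w *+ p.
Proof.
case: p => [//|p] pp cxy; rewrite exprDn_comm // big_ord_recr big_ord_recl /=.
exists (\sum_(i < p) (x ^+ (p.+1 - bump 0 i) * y ^+ bump 0 i) *+ ('C(p.+1, bump 0 i) %/ p.+1)).
rewrite subn0 subnn bin0 binn expr0 mulr1 mul1r -sumrMnl !mulr1n addrAC; congr (_ + _).
apply: eq_bigr => i _; rewrite -mulrnA divnK // prime_dvd_bin //.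
by rewrite /bump /= add1n ltnS ltn_ord.
Qed.

(* a + b sqrt D |-> [[a, D b], [b, a]] embeds Z[sqrt D] into integer matrices, where the
   binomial theorem for commuting elements is available. *)
Definition qmx (D : Z) (x : Z * Z) : 'M[Z]_2 :=
  \matrix_(i, j) if i == j then x.1 else if i == 0 then Z.mul D x.2 else x.2.

Section Embedding.
Variable D : Z.

Lemma qmxM x y : qmx D x * qmx D y = qmx D (qmul D x y).
Proof.
apply/matrixP => i j; rewrite -mulmxE !mxE !big_ord_recl big_ord0 !mxE.
by case: i => [[|[|//]] ?]; case: j => [[|[|//]] ?]; rewrite /qmul /=; ring.
Qed.

Lemma qmxD x y : qmx D x + qmx D y = qmx D (qadd x y).
Proof.
apply/matrixP => i j; rewrite !mxE.
by case: i => [[|[|//]] ?]; case: j => [[|[|//]] ?]; rewrite /qadd /=; ring.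
Qed.

Lemma qmx1 : qmx D qone = 1.
Proof.
apply/matrixP => i j; rewrite !mxE.
by case: i => [[|[|//]] ?]; case: j => [[|[|//]] ?]; rewrite /=; ring.
Qed.

Lemma qmxX x n : qmx D (qpow D x n) = qmx D x ^+ n.
Proof. by elim: n => [|n IH] /=; rewrite ?qmx1 // exprS -IH qmxM. Qed.

Lemma qpow_qadd_prime x y p : Znumtheory.prime p ->
  qcong p (qpow D (qadd x y) (Z.to_nat p))
          (qadd (qpow D x (Z.to_nat p)) (qpow D y (Z.to_nat p))).
Proof.
move=> pp; have p2 := prime_ge_2 _ pp.
have cxy : GRing.comm (qmx D x) (qmx D y) by rewrite /GRing.comm !qmxM qmulC.
have [W hW] := exprD_prime_comm _ _ _ _ (prime_of_Zprime _ pp) cxy.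
rewrite -!qmxX qmxD -qmxX qmxD in hW.
have e00 : _ = _ :> Z := congr1 (fun M : 'M[Z]_2 => M 0 0) hW.
have e10 : _ = _ :> Z := congr1 (fun M : 'M[Z]_2 => M 1 0) hW.
move: e00 e10; rewrite /= !mxE !mulmxnE !natmulZ /GRing.add /= Z2Nat.id; last lia.
move=> e00 e10; rewrite /qcong e00 e10.
by split; [exists (W 0 0) | exists (W 1 0)]; rewrite Z.add_simpl_l.
Qed.

End Embedding.
End QuadraticFrobenius.

Import QuadraticFrobenius.

Lemma euler_dichotomy D p k : prime p -> ~ (p | D) -> 0 <= k -> p = 2 * k + 1 ->
  (p | D ^ k - 1) \/ (p | D ^ k + 1).
Proof.
  intros Hp HD Hk ->.
  assert (Hprod : (2 * k + 1 | D * ((D ^ k - 1) * (D ^ k + 1)))).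
  { replace (D * ((D ^ k - 1) * (D ^ k + 1))) with (D ^ (2 * k + 1) - D)
      by (rewrite Z.pow_add_r, (Z.mul_comm 2 k), Z.pow_mul_r, Z.pow_1_r by lia; ring).
    now apply Z_fermat_little. }
  destruct (prime_mult _ Hp _ _ Hprod) as [H | H]; [contradiction |].
  now apply prime_mult.
Qed.

Lemma qpow_frobenius_odd D x p k : prime p -> ~ (p | D) -> p = 2 * Z.of_nat k + 1 ->
  qcong p (qpow D x (S (2 * k))) x \/ qcong p (qpow D x (S (2 * k))) (qconj x).
Proof.
  intros Hp HD Hpk; destruct x as [t u].
  assert (Hfrob : qcong p (qpow D (t, u) (S (2 * k))) (t ^ p, D ^ Z.of_nat k * u ^ p)).
  { replace (S (2 * k)) with (Z.to_nat p) by lia.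
    replace (t, u) with (qadd (t, 0) (0, u)) by (unfold qadd; cbn [fst snd]; f_equal; ring).
    eapply qcong_trans; [apply qpow_qadd_prime, Hp |].
    rewrite qpow_rat, Z2Nat.id by lia.
    replace (Z.to_nat p) with (S (2 * k)) by lia.
    rewrite qpow_surd_odd; replace (Z.of_nat (S (2 * k))) with p by lia.
    unfold qcong, qadd; cbn [fst snd].
    split; exists 0; ring. }
  pose proof (Z_fermat_little p t Hp) as Ht. pose proof (Z_fermat_little p u Hp) as Hu.
  destruct (euler_dichotomy D p (Z.of_nat k) Hp HD ltac:(lia) Hpk) as [HDk | HDk];
    [left | right]; eapply qcong_trans; try exact Hfrob;
    unfold qcong, qconj; cbn [fst snd]; split; try exact Ht.
  - replace (D ^ Z.of_nat k * u ^ p - u)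
      with (D ^ Z.of_nat k * (u ^ p - u) + (D ^ Z.of_nat k - 1) * u) by ring.
    auto using Z.divide_add_r, Z.divide_mul_l, Z.divide_mul_r.
  - replace (D ^ Z.of_nat k * u ^ p - - u)
      with (D ^ Z.of_nat k * (u ^ p - u) + (D ^ Z.of_nat k + 1) * u) by ring.
    auto using Z.divide_add_r, Z.divide_mul_l, Z.divide_mul_r.
Qed.

Lemma odd_prime_half p : prime p -> p <> 2 -> p = 2 * (p / 2) + 1.
Proof.
  intros Hp Hp2; pose proof (prime_ge_2 p Hp).
  pose proof (Z.div_mod p 2 ltac:(lia)); pose proof (Z.mod_pos_bound p 2 ltac:(lia)).
  destruct (Z.eq_dec (p mod 2) 0) as [Hev | ]; [| lia].
  destruct (prime_divisors p Hp 2 (Zmod_divide p 2 ltac:(lia) Hev)) as [|[|[|]]]; lia.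
Qed.

Section LocalOrder.
Variables (D : Z) (x : Z * Z).
Hypothesis Hx : qnorm D x = 1.

Lemma qpow_two_norm1 : qpow D x 2 = (1 + 2 * D * (snd x * snd x), 2 * (fst x * snd x)).
Proof.
  destruct x as [t u]; unfold qnorm in Hx; cbn [fst snd] in *.
  cbn [qpow]; unfold qmul, qone; cbn [fst snd]; f_equal; nia.
Qed.

Lemma qmul_conj_norm1 : qmul D x (qconj x) = qone.
Proof. now rewrite qmul_conj, Hx. Qed.

Lemma qpow_order_two : qcong 2 (qpow D x 2) qone.
Proof.
  rewrite qpow_two_norm1; unfold qcong, qone; cbn [fst snd].
  split; [exists (D * (snd x * snd x)) | exists (fst x * snd x)]; ring.
Qed.

Lemma qpow_order_prime_dvd p : 0 <= p -> (p | D) -> qcong p (qpow D x (2 * Z.to_nat p)) qone.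
Proof.
  intros Hp HD; rewrite qpowM, qpow_two_norm1.
  eapply qcong_trans; [apply qpow_near_one |]; rewrite ?Z2Nat.id by lia;
    try solve [auto using Z.divide_mul_l, Z.divide_mul_r].
  split; unfold qone; cbn [fst snd];
    [exists (2 * D * (snd x * snd x)) | exists (2 * (fst x * snd x))]; ring.
Qed.

Lemma qpow_order_odd_prime p k : prime p -> ~ (p | D) -> p = 2 * Z.of_nat k + 1 ->
  qcong p (qpow D x (2 * k)) qone \/ qcong p (qpow D x (2 * S k)) qone.
Proof.
  intros Hp HD Hpk; rewrite <- qmul_conj_norm1.
  destruct (qpow_frobenius_odd D x p k Hp HD Hpk) as [Hfix | Hconj]; [left | right].
  - replace (qpow D x (2 * k)) with (qmul D (qpow D x (S (2 * k))) (qconj x)).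
    + apply qcong_mul; [exact Hfix | apply qcong_refl].
    + rewrite qpowS, (qmulC D x), <- qmulA, qmul_conj_norm1; apply qmulr1.
  - replace (2 * S k)%nat with (S (S (2 * k))) by lia.
    rewrite qpowS; apply qcong_mul; [apply qcong_refl | exact Hconj].
Qed.

Lemma qpow_order_prime p : prime p ->
  exists f : nat, (1 <= f)%nat /\ Z.of_nat f <= p /\ qcong p (qpow D x (2 * f)) qone.
Proof.
  intros Hp; pose proof (prime_ge_2 p Hp) as Hp_ge2.
  destruct (Z.eq_dec p 2) as [-> | Hp2].
  { exists 1%nat; split; [lia | split; [lia | now apply qpow_order_two]]. }
  destruct (Zdivide_dec p D) as [HD | HD].
  { exists (Z.to_nat p); split; [lia | split; [lia | apply qpow_order_prime_dvd; auto; lia]]. }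
  set (k := Z.to_nat (p / 2)).
  assert (Hpk : p = 2 * Z.of_nat k + 1) by (pose proof (odd_prime_half p Hp Hp2); unfold k; lia).
  destruct (qpow_order_odd_prime p k Hp HD Hpk) as [Hord | Hord]; [exists k | exists (S k)];
    (split; [lia | split; [lia | exact Hord]]).
Qed.

End LocalOrder.

Lemma qpow_lift D x k p : 0 <= p -> (p | k) -> qcong k x qone ->
  qcong (p * k) (qpow D x (Z.to_nat p)) qone.
Proof.
  intros Hp [c ->] [[a Ha] [b Hb]].
  destruct x as [x1 x2]; unfold qone in *; cbn [fst snd] in *.
  replace (x1, x2) with (1 + a * (c * p), b * (c * p)) by (f_equal; lia).
  eapply qcong_trans; [apply qpow_near_one |]; rewrite ?Z2Nat.id by lia.
  - exists (a * a * c); ring.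
  - exists (a * b * c); ring.
  - exists (D * b * b * c); ring.
  - split; cbn [fst snd]; [exists a | exists b]; ring.
Qed.

Lemma exists_prime_divisor m : 1 < m -> exists p, prime p /\ (p | m).
Proof.
  intros Hm; pattern m; apply (Zlt_lower_bound_ind _ 2); [| lia]; clear m Hm.
  intros m IH Hm.
  destruct (prime_dec m) as [Hp | Hp].
  - exists m; split; [exact Hp | apply Z.divide_refl].
  - destruct (not_prime_divide m ltac:(lia) Hp) as [n [Hn Hnm]].
    destruct (IH n ltac:(lia)) as [p [Hp' Hpn]].
    exists p; split; [exact Hp' | now apply Z.divide_trans with n].
Qed.

Lemma divide_mul_prime p k c : prime p -> ~ (p | k) -> (p | c) -> (k | c) -> (p * k | c).
Proof.
  intros Hp Hpk Hpc [j ->].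
  destruct (prime_mult p Hp j k Hpc) as [[i ->] | Hk]; [| contradiction].
  exists i; ring.
Qed.

Lemma qcong_mul_prime p k x y :
  prime p -> ~ (p | k) -> qcong p x y -> qcong k x y -> qcong (p * k) x y.
Proof. intros Hp Hpk [Hp1 Hp2] [Hk1 Hk2]; split; now apply divide_mul_prime. Qed.

Lemma qpow_order_bound D x : qnorm D x = 1 -> forall m, 0 < m ->
  exists q : nat, (1 <= q)%nat /\ Z.of_nat q <= m /\ qcong m (qpow D x (2 * q)) qone.
Proof.
  intros Hx m Hm; pattern m; apply (Zlt_lower_bound_ind _ 1); [| lia]; clear m Hm.
  intros m IH Hm.
  destruct (Z.eq_dec m 1) as [-> | Hm1].
  { exists 1%nat; split; [lia | split; [lia | split; apply Z.divide_1_l]]. }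
  destruct (exists_prime_divisor m ltac:(lia)) as [p [Hp [k ->]]].
  pose proof (prime_ge_2 p Hp).
  assert (Hk : 0 < k) by nia.
  destruct (IH k ltac:(nia)) as [q [Hq1 [Hqk Hq]]].
  rewrite Z.mul_comm.
  destruct (Zdivide_dec p k) as [Hpk | Hpk].
  - exists (Z.to_nat p * q)%nat; split; [nia | split; [nia |]].
    replace (2 * (Z.to_nat p * q))%nat with (2 * q * Z.to_nat p)%nat by lia.
    rewrite qpowM; apply qpow_lift; [lia | exact Hpk | exact Hq].
  - destruct (qpow_order_prime D x Hx p Hp) as [f [Hf1 [Hfp Hf]]].
    exists (q * f)%nat; split; [nia | split; [nia |]].
    apply qcong_mul_prime; [exact Hp | exact Hpk | |].
    + replace (2 * (q * f))%nat with (2 * f * q)%nat by lia.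
      rewrite qpowM; now apply qcong_pow_one.
    + replace (2 * (q * f))%nat with (2 * q * f)%nat by lia.
      rewrite qpowM; now apply qcong_pow_one.
Qed.

Lemma mod_eq_of_divide m a b : 0 < m -> (m | a - b) -> a mod m = b mod m.
Proof. intros Hm [c Hc]; replace a with (b + c * m) by lia; apply Z.mod_add; lia. Qed.

Section PellSequence.
Variables (D t1 u1 : Z).
Hypothesis Hnorm : qnorm D (t1, u1) = 1.

Lemma pell_pow_nat_qpow n : pell_pow_nat D t1 u1 n = qpow D (t1, u1) n.
Proof.
  induction n as [|n IH]; [reflexivity |].
  cbn [pell_pow_nat qpow]; rewrite IH; now destruct (qpow D (t1, u1) n).
Qed.

Lemma pell_pow_qpow k : pell_pow D t1 u1 k =
  if 0 <=? k then qpow D (t1, u1) (Z.to_nat k) else qconj (qpow D (t1, u1) (Z.to_nat (- k))).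
Proof.
  unfold pell_pow; rewrite !pell_pow_nat_qpow.
  destruct (0 <=? k); [reflexivity | now destruct (qpow D (t1, u1) (Z.to_nat (- k)))].
Qed.

Lemma pell_pow_succ k : pell_pow D t1 u1 (k + 1) = qmul D (t1, u1) (pell_pow D t1 u1 k).
Proof.
  rewrite !pell_pow_qpow.
  destruct (Z.leb_spec 0 k) as [Hk | Hk], (Z.leb_spec 0 (k + 1)) as [Hk1 | Hk1]; try lia.
  - now replace (Z.to_nat (k + 1)) with (S (Z.to_nat k)) by lia.
  - replace k with (-1) by lia.
    change (qone = qmul D (t1, u1) (qconj (qmul D (t1, u1) qone))).
    now rewrite qmulr1, (qmul_conj_norm1 D _ Hnorm).
  - replace (Z.to_nat (- k)) with (S (Z.to_nat (- (k + 1)))) by lia.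
    now rewrite qpowS, qconjM, qmulA, (qmul_conj_norm1 D _ Hnorm), qmul1.
Qed.

Lemma pell_pow_add_nat k n :
  pell_pow D t1 u1 (k + Z.of_nat n) = qmul D (qpow D (t1, u1) n) (pell_pow D t1 u1 k).
Proof.
  induction n as [|n IH].
  - rewrite Z.add_0_r; symmetry; apply qmul1.
  - rewrite Nat2Z.inj_succ, Z.add_succ_r, <- Z.add_1_r, pell_pow_succ, IH, qpowS.
    apply qmulA.
Qed.

Lemma is_period_of_qpow m n : 0 < m ->
  qcong m (qpow D (t1, u1) n) qone -> is_period D t1 u1 m (Z.of_nat n).
Proof.
  intros Hm Hn k.
  assert (H : qcong m (pell_pow D t1 u1 (k + Z.of_nat n)) (qmul D qone (pell_pow D t1 u1 k))).
  { rewrite pell_pow_add_nat; apply qcong_mul; [exact Hn | apply qcong_refl]. }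
  rewrite qmul1 in H; destruct H as [Ht Hu]; unfold pell_t, pell_u.
  split; now apply mod_eq_of_divide.
Qed.

End PellSequence.

Lemma least_positive_exists (Per : Z -> Prop) Q : 0 < Q -> Per Q ->
  exists P, (0 < P /\ Per P /\ forall Q', 0 < Q' -> Per Q' -> P <= Q') /\ P <= Q.
Proof.
  intros HQ; pattern Q; apply (Zlt_lower_bound_ind _ 1); [| lia]; clear Q HQ.
  intros Q IH HQ HPer.
  destruct (classic (exists Q', 0 < Q' < Q /\ Per Q')) as [[Q' [HQ' HPer']] | Hnone].
  - destruct (IH Q' ltac:(lia) HPer') as [P [HP HPQ']].
    exists P; split; [exact HP | lia].
  - exists Q; repeat split; try lia; try exact HPer.
    intros Q' HQ' HPer'; apply Z.nlt_ge; intros HQ'Q.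
    apply Hnone; exists Q'; split; [lia | exact HPer'].
Qed.

Lemma plog_nonneg x : (0 <= plog x)%R.
Proof.
  unfold plog; destruct (Rle_dec 4 (Rabs x)) as [H | H]; [| lra].
  pose proof ln_lt_2; pose proof (ln_increasing 2 (Rabs x) ltac:(lra) ltac:(lra)).
  unfold Rdiv; apply Rmult_le_pos; [lra | left; apply Rinv_0_lt_compat; lra].
Qed.

Theorem mainTheorem15 (D t1 u1 : Z) :
  (0 < D)%Z ->
  (~ exists s : Z, (s * s = D)%Z) ->
  fundamental_solution D t1 u1 ->
  forall m : Z, (0 < m)%Z ->
    exists P : Z, is_least_period D t1 u1 m P /\
      (IZR P <= 2 * IZR m * (plog (IZR m) + 1))%R.
Proof.
  intros _ _ [_ [_ [Hpell _]]] m Hm.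
  assert (Hnorm : qnorm D (t1, u1) = 1) by (unfold qnorm; cbn [fst snd]; rewrite <- Hpell; ring).
  destruct (qpow_order_bound D (t1, u1) Hnorm m Hm) as [q [Hq1 [Hqm Hq]]].
  destruct (least_positive_exists (is_period D t1 u1 m) (Z.of_nat (2 * q)) ltac:(lia)
              (is_period_of_qpow D t1 u1 Hnorm m _ Hm Hq)) as [P [HP HPq]].
  exists P; split; [exact HP |].
  assert (HP2m : (IZR P <= 2 * IZR m)%R) by (rewrite <- mult_IZR; apply IZR_le; lia).
  pose proof (plog_nonneg (IZR m)); pose proof (IZR_lt 0 m Hm); nra.
Qed.
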